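(* Let $W$ be a finite-dimensional vector space over $\mathbb{F}_q$ and let $\mathcal{C}$ be a code (a set of subspaces of $W$) with $|\mathcal{C}|\ge 2$. Let $D(\mathcal{C})=\min_{X,Y\in\mathcal{C},X\ne Y} d(X,Y)$ and $\ell(\mathcal{C})=\max_{X\in\mathcal{C}}\dim X$, where $d(A,B)=\dim(A+B)-\dim(A\cap B)$. Let $V\in\mathcal{C}$, let $k\ge 0$ be an integer, and let $V'$ be a subspace of $V$ such that $V'$ is a $k$-dimensional subspace of $V$ if $\dim V>k$, and $V'=V$ otherwise. Let $E$ be a subspace of $W$ with $E\cap V'=\{0\}$ and $\dim E=t$, and let $U=V'\oplus E$. Let $\rho=\max\{0,\ell(\mathcal{C})-k\}$. If $2(t+\rho)<D(\mathcal{C})$, then $d(U,V)<d(U,T)$ for every $T\in\mathcal{C}$ with $T\ne V$; i.e., a minimum distance decoder (which returns a codeword nearest to $U$ in the metric $d$) returns $V$.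
   Context: A code is a nonempty set of subspaces of $W$. A minimum distance decoder takes a subspace $U$ and returns a codeword $V\in\mathcal{C}$ with $d(U,V)\le d(U,V'')$ for all $V''\in\mathcal{C}$. *)

From HB Require Import structures.
From mathcomp Require Import all_boot all_order all_algebra.
Set Implicit Arguments. Unset Strict Implicit. Unset Printing Implicit Defensive.
Import GRing.Theory.
Local Open Scope ring_scope.

Definition sdist (F : fieldType) (W : vectType F) (A B : {vspace W}) : nat :=
  (\dim (A + B)%VS - \dim (A :&: B)%VS)%N.

(* D(C) = min over distinct pairs X,Y in C of d(X,Y).  The initial value
   \dim fullv is an upper bound of every d(X,Y), so for |C| >= 2 this is
   exactly the minimum. *)
Definition min_dist (F : fieldType) (W : vectType F) (C : seq {vspace W}) : nat :=
  let top := \dim (fullv : {vspace W}) in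
  \big[minn/top]_(X <- C) \big[minn/top]_(Y <- C | X != Y) sdist X Y.

Definition max_dim (F : fieldType) (W : vectType F) (C : seq {vspace W}) : nat :=
  \max_(X <- C) \dim X.

From HB Require Import structures.
From mathcomp Require Import all_boot all_order all_algebra.
From mathcomp Require Import zify.

Set Implicit Arguments.
Unset Strict Implicit.
Unset Printing Implicit Defensive.

Import Order.TTheory.

(* The subspace distance d(A, B) = dim A + dim B - 2 dim (A ∩ B) is a metric.
   The received space U contains V', so it shares at least dim V' >= dim V - rho
   dimensions with V and has at most t more; hence d(U, V) <= t + rho.  Any other
   codeword T is at distance at least D(C) > 2 (t + rho) from V, so by the
   triangle inequality it is farther from U than V is. *)

Lemma bigminn_seq_le (I : eqType) (r : seq I) (P : pred I) (G : I -> nat) top i :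
  i \in r -> P i -> (\big[minn/top]_(j <- r | P j) G j <= G i)%N.
Proof. by move=> ir Pi; have := ge_bigmin_seq top _ _ G ir Pi; rewrite minEnat. Qed.

Section SubspaceDistance.

Variables (F : fieldType) (W : vectType F).
Implicit Types A B C U V E X Y : {vspace W}.

Lemma sdist_dim A B : (sdist A B + 2 * \dim (A :&: B) = \dim A + \dim B)%N.
Proof.
have := dimv_sum_cap A B.
have := dimvS (subv_trans (capvSl A B) (addvSl A B)).
rewrite /sdist; lia.
Qed.

Lemma sdistC A B : sdist A B = sdist B A.
Proof. by rewrite /sdist addvC capvC. Qed.

Lemma sdist_triangle A B C : (sdist A C <= sdist A B + sdist B C)%N.
Proof.
have := sdist_dim A B; have := sdist_dim B C; have := sdist_dim A C.
have := dimv_sum_cap (A :&: B) (B :&: C).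
have sum_sub_B : (\dim (A :&: B + B :&: C) <= \dim B)%N.
  by apply: dimvS; rewrite subv_add capvSr capvSl.
have cap_sub_AC : (\dim ((A :&: B) :&: (B :&: C)) <= \dim (A :&: C))%N.
  apply: dimvS; rewrite subv_cap.
  by rewrite (subv_trans (capvSl _ _) (capvSl _ _))
             (subv_trans (capvSr _ _) (capvSr _ _)).
lia.
Qed.

Lemma sdist_lt_of_double_lt U V X r :
  (sdist U V <= r)%N -> (2 * r < sdist V X)%N -> (sdist U V < sdist U X)%N.
Proof. by have := sdist_triangle V U X; rewrite (sdistC V U); lia. Qed.

Lemma sdist_addv_le (V' : {vspace W}) E V :
  (V' <= V)%VS -> (sdist (V' + E) V <= \dim E + (\dim V - \dim V'))%N.
Proof.
move=> sV'V; have [dim_sum_le _] := dimv_add_leqif V' E.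
have : (\dim V' <= \dim ((V' + E) :&: V))%N.
  by apply: dimvS; rewrite subv_cap addvSl sV'V.
have := sdist_dim (V' + E) V; have := dimvS sV'V; lia.
Qed.

Lemma min_dist_le (Cs : seq {vspace W}) X Y :
  X \in Cs -> Y \in Cs -> X != Y -> (min_dist Cs <= sdist X Y)%N.
Proof.
move=> XCs YCs neqXY; rewrite /min_dist.
pose dist_from Z :=
  \big[minn/(\dim (fullv : {vspace W}))]_(Z' <- Cs | Z != Z') sdist Z Z'.
apply: leq_trans (bigminn_seq_le (P := predT) dist_from _ XCs isT) _.
exact: bigminn_seq_le.
Qed.

Lemma dim_le_max_dim (Cs : seq {vspace W}) X : X \in Cs -> (\dim X <= max_dim Cs)%N.
Proof. by move=> XCs; apply: (leq_bigmax_seq _ XCs). Qed.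

End SubspaceDistance.

Theorem theorem2 (F : finFieldType) (W : vectType F) (C : seq {vspace W})
  (HC : exists X Y, [/\ X \in C, Y \in C & X != Y])
  (V : {vspace W}) (HV : V \in C) (k : nat) (V' : {vspace W})
  (HV'sub : (V' <= V)%VS)
  (HV' : if (k < \dim V)%N then \dim V' = k else V' = V)
  (E : {vspace W}) (t : nat)
  (HEV : (E :&: V')%VS = 0%VS) (HEt : \dim E = t)
  (U : {vspace W}) (HU : U = (V' + E)%VS) :
  let rho := maxn 0 (max_dim C - k) in
  (2 * (t + rho) < min_dist C)%N ->
  forall T, T \in C -> T != V -> (sdist U V < sdist U T)%N.
Proof.
move=> rho ltDC T TC neqTV.
have truncation : (\dim V - \dim V' <= rho)%N.
  have := dim_le_max_dim HV.
  by rewrite /rho; case: ifP HV' => _ ->; lia.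
apply: (sdist_lt_of_double_lt (r := t + rho)).
  by rewrite HU -HEt; apply: leq_trans (sdist_addv_le E HV'sub) _; rewrite leq_add2l.
by apply: leq_trans ltDC (min_dist_le HV TC _); rewrite eq_sym.
Qed.
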